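(* If $u,v$ are distinct terms in $T_1^\circ$, then in $B_\bullet$ the element $u(1)^{-1}v(1)$ does not belong to the image $\mathrm{Im}\,\partial$ of $\partial$.
   Context: $T_1^\circ$ is the set of terms in a single variable $x$ built with a binary operator $\circ$. The group $B_\bullet$ is generated by $\sigma_1,\sigma_2,\dots$ and $a_1,a_2,\dots$ subject to: $\sigma_j\sigma_i=\sigma_i\sigma_j$ and $a_j\sigma_i=\sigma_ia_j$ for $j\ge i+2$; $a_j\sigma_i=\sigma_{i+1}a_j$ and $a_ja_i=a_{i+1}a_j$ for $j\le i-1$; $\sigma_j\sigma_i\sigma_j=\sigma_i\sigma_j\sigma_i$, $\sigma_i\sigma_ja_i=a_j\sigma_i$ and $\sigma_j\sigma_ia_j=a_i\sigma_i$ for $j=i+1$. $\partial$ is the endomorphism of $B_\bullet$ with $\partial\sigma_i=\sigma_{i+1}$, $\partial a_i=a_{i+1}$. The operation $\circ$ on $B_\bullet$ is $\beta\circ\gamma=\beta\cdot\partial\gamma\cdot a_1$, and for $v\in T_1^\circ$, $v(1)$ is its evaluation at the identity $1$: $x(1)=1$ and $(v_1\circ v_2)(1)=v_1(1)\cdot\partial v_2(1)\cdot a_1$. *)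

(* The group B_bullet is given by the presentation in the paper;
   we realise it as words in the generators and their inverses modulo the
   congruence generated by free cancellation and the defining relations. *)
From Stdlib Require Import List Arith.
Import ListNotations.

(* Generators, 0-based: [Sig i] is sigma_{i+1}, [Agen i] is a_{i+1}. *)
Inductive gen : Type := Sig (i : nat) | Agen (i : nat).

(* A letter: a generator and a flag [true] meaning its inverse. *)
Definition letter : Type := (gen * bool)%type.
Definition word : Type := list letter.

Definition s (i : nat) : word := [(Sig i, false)].
Definition a (i : nat) : word := [(Agen i, false)].

(* Defining relations lhs = rhs of B_bullet (indices shifted by one,
   which does not affect the relations as they only involve differences). *)
Inductive defrel : word -> word -> Prop :=
| R_ss_far  : forall i j, i + 2 <= j -> defrel (s j ++ s i) (s i ++ s j)
| R_as_far  : forall i j, i + 2 <= j -> defrel (a j ++ s i) (s i ++ a j)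
| R_as_near : forall i j, j + 1 <= i -> defrel (a j ++ s i) (s (S i) ++ a j)
| R_aa_near : forall i j, j + 1 <= i -> defrel (a j ++ a i) (a (S i) ++ a j)
| R_braid   : forall i, defrel (s (S i) ++ s i ++ s (S i)) (s i ++ s (S i) ++ s i)
| R_ssa1    : forall i, defrel (s i ++ s (S i) ++ a i) (a (S i) ++ s i)
| R_ssa2    : forall i, defrel (s (S i) ++ s i ++ a (S i)) (a i ++ s i).

Inductive basic : word -> word -> Prop :=
| B_cancel : forall g b, basic [(g, b); (g, negb b)] []
| B_rel : forall x y, defrel x y -> basic x y.

Inductive weq : word -> word -> Prop :=
| weq_refl  : forall w, weq w w
| weq_sym   : forall w1 w2, weq w1 w2 -> weq w2 w1
| weq_trans : forall w1 w2 w3, weq w1 w2 -> weq w2 w3 -> weq w1 w3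
| weq_step  : forall l r x y, basic x y -> weq (l ++ x ++ r) (l ++ y ++ r).

Definition inv_letter (x : letter) : letter := (fst x, negb (snd x)).
Definition winv (w : word) : word := rev (map inv_letter w).

Definition shift_gen (g : gen) : gen :=
  match g with Sig i => Sig (S i) | Agen i => Agen (S i) end.
Definition partial (w : word) : word :=
  map (fun x => (shift_gen (fst x), snd x)) w.

Inductive term : Type := X | Op (t1 t2 : term).

Fixpoint eval1 (t : term) : word :=
  match t with
  | X => []
  | Op t1 t2 => eval1 t1 ++ partial (eval1 t2) ++ a 0
  end.

(* B acts on the right on sequences of naturals: sigma_i swaps the entries i and
   i+1, while a_i merges them into the single entry given by the Cantor pairing of
   the two (and a_i^-1 splits an entry back).  The image of partial only touches
   the tail of a sequence, so it fixes the first entry.  Starting from the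
   constant sequence 1, the word u(1) writes into the first entry a code of the
   tree u, and this code is injective.  Hence if u(1)^-1 v(1) lay in Im partial,
   the first entries produced by u(1) and by v(1) would agree, forcing u = v. *)
From Stdlib Require Import List Arith Lia Cantor FunctionalExtensionality.
Import ListNotations.

Definition cpair (m n : nat) : nat := Cantor.to_nat (m, n).
Definition cunpair (z : nat) : nat * nat := Cantor.of_nat z.

Lemma cunpair_cpair m n : cunpair (cpair m n) = (m, n).
Proof. apply Cantor.cancel_of_to. Qed.

Lemma cpair_cunpair z : cpair (fst (cunpair z)) (snd (cunpair z)) = z.
Proof. unfold cpair, cunpair. rewrite <- surjective_pairing. apply Cantor.cancel_to_of. Qed.

Lemma cpair_inj m n m' n' : cpair m n = cpair m' n' -> m = m' /\ n = n'.
Proof. unfold cpair; intro H. apply Cantor.to_nat_inj in H. injection H as Hm Hn. auto. Qed.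

Lemma cpair_ge_add m n : m + n <= cpair m n.
Proof. pose proof (Cantor.to_nat_non_decreasing m n). unfold cpair. lia. Qed.

Definition scons (h : nat) (y : nat -> nat) : nat -> nat :=
  fun n => match n with 0 => h | S n => y n end.
Definition stail (y : nat -> nat) : nat -> nat := fun n => y (S n).
Definition sdrop (k : nat) (y : nat -> nat) : nat -> nat := fun n => y (n + k).

Lemma stail_scons h y : stail (scons h y) = y.
Proof. reflexivity. Qed.

Lemma sdrop_sdrop k l y : sdrop k (sdrop l y) = sdrop (l + k) y.
Proof. apply functional_extensionality; intro n; unfold sdrop; f_equal; lia. Qed.

Definition swap_at (i : nat) (y : nat -> nat) : nat -> nat :=
  fun n => if n =? i then y (S i) else if n =? S i then y i else y n.
Definition merge_at (i : nat) (y : nat -> nat) : nat -> nat :=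
  fun n => if n <? i then y n else if n =? i then cpair (y i) (y (S i)) else y (S n).
Definition split_at (i : nat) (y : nat -> nat) : nat -> nat :=
  fun n => if n <? i then y n else if n =? i then fst (cunpair (y i))
           else if n =? S i then snd (cunpair (y i)) else y (pred n).

Definition act_letter (l : letter) (y : nat -> nat) : nat -> nat :=
  match l with
  | (Sig i, _) => swap_at i y
  | (Agen i, false) => merge_at i y
  | (Agen i, true) => split_at i y
  end.

Fixpoint act (w : word) (y : nat -> nat) : nat -> nat :=
  match w with
  | [] => y
  | l :: w' => act w' (act_letter l y)
  end.

Ltac case_nat_tests :=
  repeat match goal with
  | |- context [?m =? ?n] => destruct (Nat.eqb_spec m n)
  | |- context [?m <? ?n] => destruct (Nat.ltb_spec m n)
  end; subst; try lia; try reflexivity.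

Lemma act_app w1 w2 y : act (w1 ++ w2) y = act w2 (act w1 y).
Proof. revert y; induction w1; simpl; auto. Qed.

Lemma act_letter_inv l y : act_letter (inv_letter l) (act_letter l y) = y.
Proof.
  apply functional_extensionality; intro n.
  destruct l as [[i|i] [|]]; simpl; unfold swap_at, merge_at, split_at;
    case_nat_tests; rewrite ?cunpair_cpair, ?cpair_cunpair; try reflexivity; f_equal; lia.
Qed.

Lemma act_winv w y : act (winv w) (act w y) = y.
Proof.
  revert y; induction w as [|l w IH]; intro y; simpl; auto.
  unfold winv in *; simpl.
  rewrite act_app, IH. apply act_letter_inv.
Qed.

Lemma basic_act x x' y : basic x x' -> act x y = act x' y.
Proof.
  intro H. apply functional_extensionality; intro n.
  destruct H as [[i|i] [|] | ? ? []]; simpl; unfold swap_at, merge_at, split_at;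
    case_nat_tests; rewrite ?cunpair_cpair, ?cpair_cunpair; try reflexivity; f_equal; lia.
Qed.

Lemma weq_act w1 w2 z : weq w1 w2 -> act w1 z = act w2 z.
Proof.
  intro H; revert z; induction H; intro z.
  - reflexivity.
  - symmetry; auto.
  - etransitivity; eauto.
  - rewrite !act_app. rewrite (basic_act _ _ _ H). reflexivity.
Qed.

Lemma act_letter_shift g b y :
  act_letter (shift_gen g, b) y = scons (y 0) (act_letter (g, b) (stail y)).
Proof.
  apply functional_extensionality; intros [|n];
    destruct g as [i|i], b; simpl; unfold swap_at, merge_at, split_at, stail;
    case_nat_tests; f_equal; lia.
Qed.

Lemma act_partial w y : act (partial w) y = scons (y 0) (act w (stail y)).
Proof.
  revert y; induction w as [|[g b] w IH]; intro y.
  - apply functional_extensionality; intros [|n]; reflexivity.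
  - cbn [partial map act fst snd].
    rewrite act_letter_shift, IH. reflexivity.
Qed.

Lemma act_partial_head w y : act (partial w) y 0 = y 0.
Proof. rewrite act_partial. reflexivity. Qed.

Lemma merge_at0_scons m n y : merge_at 0 (scons m (scons n y)) = scons (cpair m n) y.
Proof. apply functional_extensionality; intros [|n']; reflexivity. Qed.

Fixpoint leaves (t : term) : nat :=
  match t with X => 1 | Op t1 t2 => leaves t1 + leaves t2 end.

Fixpoint eval_code (t : term) (y : nat -> nat) : nat :=
  match t with
  | X => y 0
  | Op t1 t2 => cpair (eval_code t1 y) (eval_code t2 (sdrop (leaves t1) y))
  end.

Lemma act_eval1 t y :
  act (eval1 t) y = scons (eval_code t y) (sdrop (leaves t) y).
Proof.
  revert y; induction t as [|t1 IH1 t2 IH2]; intro y; simpl.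
  - apply functional_extensionality; intros [|n]; unfold sdrop; simpl; f_equal; lia.
  - rewrite !act_app, IH1, act_partial, stail_scons, IH2, sdrop_sdrop.
    apply merge_at0_scons.
Qed.

(* Seeding with 1 rather than 0 keeps the leaf apart from the nodes, as cpair 0 0 = 0. *)
Definition term_code (t : term) : nat := eval_code t (fun _ => 1).

Lemma term_code_Op t1 t2 : term_code (Op t1 t2) = cpair (term_code t1) (term_code t2).
Proof. reflexivity. Qed.

Lemma term_code_pos t : 1 <= term_code t.
Proof.
  induction t as [|t1 IH1 t2 IH2]; [reflexivity|].
  rewrite term_code_Op. pose proof (cpair_ge_add (term_code t1) (term_code t2)). lia.
Qed.

Lemma term_code_Op_gt1 t1 t2 : 1 < term_code (Op t1 t2).
Proof.
  rewrite term_code_Op.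
  pose proof (cpair_ge_add (term_code t1) (term_code t2)).
  pose proof (term_code_pos t1); pose proof (term_code_pos t2). lia.
Qed.

Lemma term_code_inj t1 t2 : term_code t1 = term_code t2 -> t1 = t2.
Proof.
  revert t2; induction t1 as [|l1 IHl r1 IHr]; intros [|l2 r2] H; try reflexivity.
  - pose proof (term_code_Op_gt1 l2 r2) as Hgt. rewrite <- H in Hgt.
    destruct (Nat.lt_irrefl 1 Hgt).
  - pose proof (term_code_Op_gt1 l1 r1) as Hgt. rewrite H in Hgt.
    destruct (Nat.lt_irrefl 1 Hgt).
  - rewrite !term_code_Op in H. apply cpair_inj in H as [Hl Hr].
    f_equal; auto.
Qed.

Theorem lemma2p9 (u v : term) :
  u <> v ->
  ~ (exists w : word, weq (partial w) (winv (eval1 u) ++ eval1 v)).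
Proof.
  intros Huv [w Hw]. apply Huv, term_code_inj.
  pose proof (weq_act _ _ (act (eval1 u) (fun _ => 1)) Hw) as Hact.
  apply (f_equal (fun z => z 0)) in Hact.
  rewrite act_partial_head, act_app, act_winv, !act_eval1 in Hact.
  exact Hact.
Qed.
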